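(* For each $n\ge0$, the functor $\tau_n\colon\mathsf{cSet}^+\to\mathsf{cSet}^+$ is a left Quillen functor from the $n$-trivial comical model structure to the comical model structure.
   Context: Cubical sets are presheaves on the box category $\square$ (objects $[1]^n=\{0<1\}^n$; morphisms generated by faces $\partial_{i,\varepsilon}$, degeneracies $\sigma_i$ and max/min connections $\gamma_{i,1},\gamma_{i,0}$); a cube is degenerate if it is $x\sigma_i$ or $x\gamma_{i,\varepsilon}$; faces have unique normal forms $\partial_{k_1,\varepsilon_1}\cdots\partial_{k_t,\varepsilon_t}$ with $k_1>\dots>k_t$. A marked cubical set is a cubical set with marked cubes of positive dimension containing all degenerate cubes; maps preserve marked cubes; category $\mathsf{cSet}^+$. $\tau_n X$ has the same underlying cubical set as $X$, with a $k$-cube marked iff it is marked in $X$ or $k\ge n+1$; $\tau_n$ is left adjoint to the functor taking the maximal $n$-trivial sub-object. $\square^m_{k,\varepsilon}$ ($m\ge1$, $1\le k\le m$) is $\square^m$ with a non-degenerate positive-dimensional face in normal form marked iff none of its factors is $\partial_{k-1,\varepsilon},\partial_{k,0},\partial_{k,1},\partial_{k+1,\varepsilon}$; $\sqcap^m_{k,\varepsilon}$ is the open box (union of codimension-one faces other than $\partial_{k,\varepsilon}$) with regular marking; $(\square^m_{k,\varepsilon})''=\tau_{m-2}\square^m_{k,\varepsilon}$ and $(\square^m_{k,\varepsilon})'$ is $\square^m_{k,\varepsilon}$ with all $(m-1)$-faces other than $\partial_{k,\varepsilon}$ marked ($m\ge2$). $\widetilde\square^m$ is $\square^m$ (minimally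 marked) with the top cube marked. A set of trivial cofibrations is pseudo-generating if every map with fibrant codomain having the right lifting property against it is a fibration. The comical model structure on $\mathsf{cSet}^+$: cofibrations are the monomorphisms, and the comical open box inclusions $\sqcap^m_{k,\varepsilon}\hookrightarrow\square^m_{k,\varepsilon}$ and elementary comical marking extensions $(\square^m_{k,\varepsilon})'\hookrightarrow(\square^m_{k,\varepsilon})''$ form a pseudo-generating set of trivial cofibrations. The $n$-trivial comical model structure: cofibrations are the monomorphisms, and the comical open box inclusions, the elementary comical marking extensions of dimension $m\le n+1$, and the markers $\square^m\to\widetilde\square^m$ with $m>n$ form a pseudo-generating set of trivial cofibrations. *)

From HB Require Import structures.
From mathcomp Require Import all_boot.
From mathcomp Require Import zify.
From Stdlib Require Import ProofIrrelevance FunctionalExtensionality.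
Set Implicit Arguments. Unset Strict Implicit. Unset Printing Implicit Defensive.

(* Vertices of [1]^n are n-tuples of booleans; coordinates are         *)
(* numbered 1..n.  Generators acting on bit lists:                     *)
(*   face_s k e : inserts e as new coordinate k   (d_{k,e})             *)
(*   degen_s i  : deletes coordinate i            (sigma_i)             *)
(*   conn_s i e : merges coordinates i,i+1 by max (e = true) or min     *)
(*                (e = false)                      (gamma_{i,e})         *)

Definition face_s (k : nat) (e : bool) (s : seq bool) : seq bool :=
  take k.-1 s ++ e :: drop k.-1 s.
Definition degen_s (i : nat) (s : seq bool) : seq bool :=
  take i.-1 s ++ drop i s.
Definition conn_s (i : nat) (e : bool) (s : seq bool) : seq bool :=
  take i.-1 s ++
   (if e then nth false s i.-1 || nth false s i
         else nth false s i.-1 && nth false s i) :: drop i.+1 s.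

Inductive is_box : nat -> nat -> (seq bool -> seq bool) -> Prop :=
| box_id m : is_box m m (@id (seq bool))
| box_face m k e : 0 < k <= m.+1 -> is_box m m.+1 (face_s k e)
| box_degen m i : 0 < i <= m.+1 -> is_box m.+1 m (degen_s i)
| box_conn m i e : 0 < i <= m.+1 -> is_box m.+2 m.+1 (conn_s i e)
| box_comp l m n g h : is_box l m g -> is_box m n h -> is_box l n (h \o g).

Definition is_box_map m n (f : {ffun m.-tuple bool -> n.-tuple bool}) : Prop :=
  exists2 g, is_box m n g & forall t, val (f t) = g (val t).

Definition boxHom m n := {f : {ffun m.-tuple bool -> n.-tuple bool} | is_box_map f}.

Lemma bid_proof n : is_box_map [ffun t : n.-tuple bool => t].
Proof. by exists id; [exact: box_id | move=> t; rewrite ffunE]. Qed.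

Definition bid n : boxHom n n := exist _ _ (bid_proof n).

Lemma bcomp_proof l m n (g : boxHom m n) (f : boxHom l m) :
  is_box_map [ffun t => sval g (sval f t)].
Proof.
case: g => g [hg Hg Hgv]; case: f => f [hf Hf Hfv] /=.
exists (hg \o hf); first exact: box_comp Hf Hg.
by move=> t; rewrite ffunE Hgv Hfv.
Qed.

Definition bcomp l m n (g : boxHom m n) (f : boxHom l m) : boxHom l n :=
  exist _ _ (bcomp_proof g f).

Lemma boxHom_eq m n (f g : boxHom m n) : sval f = sval g -> f = g.
Proof.
case: f => f pf; case: g => g pg /= E; subst g; f_equal; apply: proof_irrelevance.
Qed.

Lemma bcomp_id_r m n (g : boxHom m n) : bcomp g (bid m) = g.
Proof. by apply: boxHom_eq; apply/ffunP => t; rewrite /= !ffunE. Qed.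

Lemma bcomp_assoc k l m n (h : boxHom m n) (g : boxHom l m) (f : boxHom k l) :
  bcomp h (bcomp g f) = bcomp (bcomp h g) f.
Proof. by apply: boxHom_eq; apply/ffunP => t; rewrite /= !ffunE. Qed.

Record cSet := CSet {
  cell : nat -> Type;
  act : forall m n, boxHom m n -> cell n -> cell m;
  act_id : forall n (x : cell n), act (bid n) x = x;
  act_comp : forall l m n (f : boxHom l m) (g : boxHom m n) (x : cell n),
      act (bcomp g f) x = act f (act g x) }.

Definition degenerate (X : cSet) n (x : cell X n) : Prop :=
  exists p (y : cell X p) (f : boxHom n p),
    act f y = x /\ n = p.+1 /\
    ((exists i, 0 < i <= n /\ forall t, val (sval f t) = degen_s i (val t)) \/
     (exists i e, 0 < i < n /\ forall t, val (sval f t) = conn_s i e (val t))).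

Lemma degenerate_pos (X : cSet) n (x : cell X n) : degenerate x -> 0 < n.
Proof. by case=> p [y [f [_ [E _]]]]; rewrite E. Qed.

Record mcSet := MCSet {
  ucset :> cSet;
  marked : forall n, cell ucset n -> Prop;
  marked_pos : forall x : cell ucset 0, ~ marked x;
  marked_degen : forall n (x : cell ucset n), degenerate x -> marked x }.

Lemma marked_gt0 (X : mcSet) n (x : cell X n) : marked x -> 0 < n.
Proof. by case: n x => // x /marked_pos. Qed.

Record mmap (X Y : mcSet) := MMap {
  mcomp : forall n, cell X n -> cell Y n;
  mnat : forall m n (f : boxHom m n) (x : cell X n),
      @mcomp m (act f x) = act f (@mcomp n x);
  mmark : forall n (x : cell X n), marked x -> marked (@mcomp n x) }.

Arguments mcomp {X Y} _ _ _.

Definition mid (X : mcSet) : mmap X X :=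
  @MMap X X (fun n x => x) (fun _ _ _ _ => erefl) (fun _ _ h => h).

Definition mcompose (X Y Z : mcSet) (g : mmap Y Z) (f : mmap X Y) : mmap X Z.
Proof.
refine (@MMap X Z (fun n x => mcomp g n (mcomp f n x)) _ _).
- by move=> m n h x; rewrite !mnat.
- by move=> n x hx; apply: mmark; apply: mmark.
Defined.

Definition homeq (X Y : mcSet) (f g : mmap X Y) : Prop :=
  forall n (x : cell X n), mcomp f n x = mcomp g n x.

Definition tau (n : nat) (X : mcSet) : mcSet.
Proof.
refine (@MCSet (ucset X) (fun k x => marked x \/ n.+1 <= k) _ _).
- by move=> x [/marked_pos|].
- by move=> k x hx; left; apply: marked_degen.
Defined.

Definition tau_map (n : nat) (X Y : mcSet) (f : mmap X Y) : mmap (tau n X) (tau n Y).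
Proof.
refine (@MMap (tau n X) (tau n Y) (fun k x => mcomp f k x) (@mnat _ _ f) _).
by move=> k x [hx|hx]; [left; apply: mmark|right].
Defined.

Definition rep (m : nat) : cSet.
Proof.
refine (@CSet (fun n => boxHom n m) (fun p n f g => bcomp g f) _ _).
- by move=> n x; apply: bcomp_id_r.
- by move=> l p n f g x; apply: bcomp_assoc.
Defined.

Definition mark_with (X : cSet) (P : forall n, cell X n -> Prop) : mcSet.
Proof.
refine (@MCSet X (fun n x => 0 < n /\ (degenerate x \/ P n x)) _ _).
- by move=> x [].
- by move=> n x hx; split; [exact: degenerate_pos hx | left].
Defined.

(* d_{k1,e1} ... d_{kt,et} as a composite of maps (d_{kt,et} applied first) *)
Definition face_nf_fun (L : seq (nat * bool)) (s : seq bool) : seq bool :=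
  foldr (fun ke s => face_s ke.1 ke.2 s) s L.

Definition is_face_nf m n (f : boxHom n m) (L : seq (nat * bool)) : Prop :=
  [/\ sorted (fun a b : nat * bool => b.1 < a.1) L,
      all (fun ke : nat * bool => 0 < ke.1 <= m) L,
      n + size L = m &
      forall t, val (sval f t) = face_nf_fun L (val t)].

Definition comical_forbidden (k : nat) (e : bool) (ke : nat * bool) : bool :=
  (ke == (k - 1, e)) || (ke.1 == k) || (ke == (k.+1, e)).

Definition comical_face_marked m k e n (f : boxHom n m) : Prop :=
  exists L, is_face_nf f L /\ ~~ has (comical_forbidden k e) L.

Definition cube (m : nat) : mcSet := mark_with (X := rep m) (fun _ _ => False).

Definition cube_top (m : nat) : mcSet :=
  mark_with (X := rep m) (fun n f => forall t, val (sval f t) = val t).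

Definition cube_k (m k : nat) (e : bool) : mcSet :=
  mark_with (X := rep m) (@comical_face_marked m k e).

Definition cube_k' (m k : nat) (e : bool) : mcSet :=
  mark_with (X := rep m) (fun n f => comical_face_marked k e f \/
     exists j d, (j, d) != (k, e) /\ is_face_nf f [:: (j, d)]).

Definition cube_k'' (m k : nat) (e : bool) : mcSet := tau (m - 2) (cube_k m k e).

Definition in_open_box m k e n (f : boxHom n m) : Prop :=
  exists j d (dd : boxHom m.-1 m) (g : boxHom n m.-1),
    [/\ (j, d) != (k, e), 0 < j <= m,
        (forall t, val (sval dd t) = face_s j d (val t)) & f = bcomp dd g].

Lemma in_open_box_act m k e p n (h : boxHom p n) (f : boxHom n m) :
  in_open_box k e f -> in_open_box k e (bcomp f h).
Proof.
case=> j [d [dd [g [H1 H2 H3 ->]]]].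
by exists j, d, dd, (bcomp g h); split => //; rewrite bcomp_assoc.
Qed.

Definition open_box_cset (m k : nat) (e : bool) : cSet.
Proof.
refine (@CSet (fun n => {f : boxHom n m | in_open_box k e f})
  (fun p n h x => exist _ (bcomp (sval x) h) (in_open_box_act h (svalP x))) _ _).
- move=> n [x px] /=; apply: eq_sig_hprop; first by move=> ?; apply: proof_irrelevance.
  exact: bcomp_id_r.
- move=> l p n f g [x px] /=; apply: eq_sig_hprop; first by move=> ?; apply: proof_irrelevance.
  exact: bcomp_assoc.
Defined.

Definition open_box (m k : nat) (e : bool) : mcSet.
Proof.
refine (@MCSet (open_box_cset m k e)
          (fun n x => @marked (cube_k m k e) n (sval x)) _ _).
- by move=> x [H _].
- move=> n x [p [y [f [Hx [Hn Hf]]]]].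
  apply: (@marked_degen (cube_k m k e) n (sval x)).
  by exists p, (sval y), f; rewrite -Hx.
Defined.

Definition open_box_incl (m k : nat) (e : bool) : mmap (open_box m k e) (cube_k m k e).
Proof.
refine (@MMap (open_box m k e) (cube_k m k e) (fun n x => sval x) _ _).
- by [].
- by move=> n x hx.
Defined.

Definition mark_ext (m k : nat) (e : bool) : mmap (cube_k' m k e) (cube_k'' m k e).
Proof.
refine (@MMap (cube_k' m k e) (cube_k'' m k e) (fun n x => x) (fun _ _ _ _ => erefl) _).
move=> n x [Hn [Hd|[Hc|[j [d [_ [_ _ Hs _]]]]]]].
- by left; split => //; left.
- by left; split => //; right.
- by right; move: Hs => /=; lia.
Defined.

Definition marker (m : nat) : mmap (cube m) (cube_top m).
Proof.
refine (@MMap (cube m) (cube_top m) (fun n x => x) (fun _ _ _ _ => erefl) _).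
by move=> n x [Hn [Hd|[]]]; split => //; left.
Defined.

Definition term_cset : cSet.
Proof.
refine (@CSet (fun _ => unit) (fun _ _ _ _ => tt) _ _).
- by move=> n [].
- by [].
Defined.

Definition term : mcSet.
Proof.
refine (@MCSet term_cset (fun n _ => 0 < n) _ _).
- by [].
- by move=> n x /degenerate_pos.
Defined.

Definition to_term (X : mcSet) : mmap X term.
Proof.
refine (@MMap X term (fun _ _ => tt) (fun _ _ _ _ => erefl) _).
by move=> n x /marked_gt0.
Defined.

Definition mapclass := forall X Y : mcSet, mmap X Y -> Prop.

Definition llp (A B X Y : mcSet) (i : mmap A B) (p : mmap X Y) : Prop :=
  forall (u : mmap A X) (v : mmap B Y),
    homeq (mcompose p u) (mcompose v i) ->
    exists h : mmap B X, homeq (mcompose h i) u /\ homeq (mcompose p h) v.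

Definition retract_of (A B X Y : mcSet) (f : mmap A B) (g : mmap X Y) : Prop :=
  exists (i : mmap A X) (r : mmap X A) (i' : mmap B Y) (r' : mmap Y B),
    [/\ homeq (mcompose r i) (mid A), homeq (mcompose r' i') (mid B),
        homeq (mcompose g i) (mcompose i' f) & homeq (mcompose f r) (mcompose r' g)].

Definition mono (X Y : mcSet) (f : mmap X Y) : Prop :=
  forall (Z : mcSet) (g h : mmap Z X),
    homeq (mcompose f g) (mcompose f h) -> homeq g h.

Record ModelStructure := {
  msW : mapclass;
  msC : mapclass;
  msF : mapclass;
  ms_2of3 : forall (X Y Z : mcSet) (f : mmap X Y) (g : mmap Y Z),
      [/\ msW f -> msW g -> msW (mcompose g f),
          msW f -> msW (mcompose g f) -> msW g &
          msW g -> msW (mcompose g f) -> msW f];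
  ms_retract : forall (A B X Y : mcSet) (f : mmap A B) (g : mmap X Y),
      retract_of f g ->
      [/\ msW g -> msW f, msC g -> msC f & msF g -> msF f];
  ms_lift_tc : forall (A B X Y : mcSet) (i : mmap A B) (p : mmap X Y),
      msC i -> msW i -> msF p -> llp i p;
  ms_lift_tf : forall (A B X Y : mcSet) (i : mmap A B) (p : mmap X Y),
      msC i -> msF p -> msW p -> llp i p;
  ms_fact_tc : forall (X Y : mcSet) (f : mmap X Y),
      exists (Z : mcSet) (i : mmap X Z) (p : mmap Z Y),
        [/\ msC i, msW i, msF p & homeq (mcompose p i) f];
  ms_fact_tf : forall (X Y : mcSet) (f : mmap X Y),
      exists (Z : mcSet) (i : mmap X Z) (p : mmap Z Y),
        [/\ msC i, msF p, msW p & homeq (mcompose p i) f] }.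

Definition fibrant (M : ModelStructure) (X : mcSet) : Prop := msF M (to_term X).

(* The comical model structure: cofibrations = monomorphisms, and the
   open box inclusions and elementary comical marking extensions form a
   pseudo-generating set of trivial cofibrations. *)
Definition is_comical (M : ModelStructure) : Prop :=
  [/\ (forall (X Y : mcSet) (f : mmap X Y), msC M f <-> mono f),
      (forall m k e, 0 < k <= m ->
         msC M (open_box_incl m k e) /\ msW M (open_box_incl m k e)),
      (forall m k e, 1 < m -> 0 < k <= m ->
         msC M (mark_ext m k e) /\ msW M (mark_ext m k e)) &
      (forall (X Y : mcSet) (p : mmap X Y), fibrant M Y ->
         (forall m k e, 0 < k <= m -> llp (open_box_incl m k e) p) ->
         (forall m k e, 1 < m -> 0 < k <= m -> llp (mark_ext m k e) p) ->
         msF M p)].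

Definition is_ntriv_comical (n : nat) (M : ModelStructure) : Prop :=
  [/\ (forall (X Y : mcSet) (f : mmap X Y), msC M f <-> mono f),
      (forall m k e, 0 < k <= m ->
         msC M (open_box_incl m k e) /\ msW M (open_box_incl m k e)),
      (forall m k e, 1 < m <= n.+1 -> 0 < k <= m ->
         msC M (mark_ext m k e) /\ msW M (mark_ext m k e)),
      (forall m, n < m -> msC M (marker m) /\ msW M (marker m)) &
      (forall (X Y : mcSet) (p : mmap X Y), fibrant M Y ->
         (forall m k e, 0 < k <= m -> llp (open_box_incl m k e) p) ->
         (forall m k e, 1 < m <= n.+1 -> 0 < k <= m -> llp (mark_ext m k e) p) ->
         (forall m, n < m -> llp (marker m) p) ->
         msF M p)].

Definition is_left_adjoint (Fo : mcSet -> mcSet)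
    (Fm : forall X Y : mcSet, mmap X Y -> mmap (Fo X) (Fo Y)) : Prop :=
  exists (Go : mcSet -> mcSet)
         (Gm : forall X Y : mcSet, mmap X Y -> mmap (Go X) (Go Y))
         (phi : forall X Y : mcSet, mmap (Fo X) Y -> mmap X (Go Y))
         (psi : forall X Y : mcSet, mmap X (Go Y) -> mmap (Fo X) Y),
    [/\ (forall X Y (f : mmap (Fo X) Y), homeq (psi _ _ (phi _ _ f)) f),
        (forall X Y (g : mmap X (Go Y)), homeq (phi _ _ (psi _ _ g)) g),
        (forall X' X Y (h : mmap X' X) (f : mmap (Fo X) Y),
            homeq (phi _ _ (mcompose f (Fm _ _ h))) (mcompose (phi _ _ f) h)) &
        (forall X Y Y' (k : mmap Y Y') (f : mmap (Fo X) Y),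
            homeq (phi _ _ (mcompose k f)) (mcompose (Gm _ _ k) (phi _ _ f)))].

Definition left_quillen (M N : ModelStructure) (Fo : mcSet -> mcSet)
    (Fm : forall X Y : mcSet, mmap X Y -> mmap (Fo X) (Fo Y)) : Prop :=
  [/\ is_left_adjoint Fm,
      (forall (X Y : mcSet) (f : mmap X Y), msC M f -> msC N (Fm _ _ f)) &
      (forall (X Y : mcSet) (f : mmap X Y), msC M f -> msW M f ->
          msC N (Fm _ _ f) /\ msW N (Fm _ _ f))].

From HB Require Import structures.
From mathcomp Require Import all_boot zify.
From Stdlib Require Import ProofIrrelevance.
Set Implicit Arguments. Unset Strict Implicit. Unset Printing Implicit Defensive.

(* tau_n has a right adjoint, the maximal n-trivial sub-object [triv_core n Y]
   (cells all of whose images of dimension > n are marked).  Since tau_n does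
   not change underlying cubical sets, it preserves monomorphisms, i.e.
   cofibrations.  A cofibration is a weak equivalence as soon as it lifts
   against all fibrations between fibrant objects ([weq_of_llp]); by adjunction
   it therefore suffices that [triv_core_map n p] is an n-trivial fibration for
   every comical fibration p with fibrant target ([core_fibration]).  By the
   pseudo-generating set of the n-trivial structure this reduces to lifting
   open box inclusions, elementary marking extensions and markers against it.
   The only delicate case is the open box: the comical lift must send every
   cell of dimension > n to a marked cell.  Cells of dimension <= m - 2 lie in
   the open box, those of dimension m - 1 are handled by an elementary marking
   extension, and those of dimension >= m are the top cell or degenerate. *)

(* Boolean formulas in the coordinates of a vertex: constants, variables
   (0-based coordinates) and binary max ([BOp true]) or min ([BOp false]). *)
Inductive bexpr := BConst of bool | BVar of nat | BOp of bool & bexpr & bexpr.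

Lemma bexpr_eq_dec (x y : bexpr) : {x = y} + {x <> y}.
Proof. decide equality; exact: eq_comparable. Qed.
HB.instance Definition _ := hasDecEq.Build bexpr (compareP bexpr_eq_dec).

Definition bool_op (b x y : bool) : bool := if b then x || y else x && y.

Fixpoint beval (s : seq bool) (e : bexpr) : bool :=
  match e with
  | BConst b => b
  | BVar i => nth false s i
  | BOp b e1 e2 => bool_op b (beval s e1) (beval s e2)
  end.

Fixpoint bvars (e : bexpr) : seq nat :=
  match e with BConst _ => [::] | BVar i => [:: i] | BOp _ e1 e2 => bvars e1 ++ bvars e2 end.

Definition all_vars (es : seq bexpr) : seq nat := flatten (map bvars es).

Lemma all_vars_cat es es' : all_vars (es ++ es') = all_vars es ++ all_vars es'.
Proof. by rewrite /all_vars map_cat flatten_cat. Qed.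

Lemma all_vars_cons e es : all_vars (e :: es) = bvars e ++ all_vars es.
Proof. by []. Qed.

(* [es] is a linear normal form of [g : [1]^q -> [1]^(size es)]: [g] computes
   the formulas [es] coordinatewise, and the variables of [es], read from left
   to right, are strictly increasing and < q (so each occurs at most once). *)
Definition linear_nf (q : nat) (es : seq bexpr) (g : seq bool -> seq bool) : Prop :=
  [/\ sorted ltn (all_vars es), all (fun i => i < q) (all_vars es) &
      forall s, size s = q -> g s = map (beval s) es].

Lemma linear_nf_sub q es es' g g' : subseq (all_vars es') (all_vars es) ->
  linear_nf q es g -> (forall s, size s = q -> g' s = map (beval s) es') ->
  linear_nf q es' g'.
Proof.
move=> Hsub [Hsort Hlt _] Hg'; split => //.
- exact: (subseq_sorted ltn_trans Hsub Hsort).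
- by apply/allP => x /(mem_subseq Hsub) Hx; move/allP: Hlt; apply.
Qed.

(* Post-composing with a box map preserves the existence of a linear normal
   form: faces insert constants, degeneracies delete formulas, connections
   combine two adjacent formulas. *)
Lemma linear_nf_post m n h : is_box m n h ->
  forall q g es, size es = m -> linear_nf q es g ->
  exists2 es', size es' = n & linear_nf q es' (h \o g).
Proof.
elim=> {m n h}.
- by move=> m q g es Hs Hnf; exists es.
- move=> m k e Hk q g es Hs Hnf.
  exists (take k.-1 es ++ BConst e :: drop k.-1 es).
    by rewrite size_cat /= size_take size_drop Hs; case: ltnP; lia.
  apply: (linear_nf_sub _ Hnf).
    by rewrite all_vars_cat all_vars_cons -all_vars_cat cat_take_drop subseq_refl.
  move=> s Hs'; case: Hnf => _ _ Hg.
  by rewrite /= Hg // /face_s map_cat /= map_take map_drop.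
- move=> m i Hi q g es Hs Hnf.
  exists (take i.-1 es ++ drop i es).
    by rewrite size_cat size_take size_drop Hs; case: ltnP; lia.
  apply: (linear_nf_sub _ Hnf).
    rewrite all_vars_cat -[X in subseq _ (all_vars X)](cat_take_drop i.-1 es).
    rewrite all_vars_cat; apply: cat_subseq => //.
    have -> : drop i es = drop 1 (drop i.-1 es) by rewrite drop_drop; congr drop; lia.
    rewrite -[X in subseq _ (all_vars X)](cat_take_drop 1 (drop i.-1 es)) all_vars_cat.
    exact: suffix_subseq.
  move=> s Hs'; case: Hnf => _ _ Hg.
  by rewrite /= Hg // /degen_s map_cat map_take map_drop.
- move=> m i b Hi q g es Hs Hnf.
  set x := nth (BConst false) es i.-1; set y := nth (BConst false) es i.
  have Ees : es = take i.-1 es ++ x :: y :: drop i.+1 es.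
    rewrite -{1}(cat_take_drop i.-1 es); congr (_ ++ _).
    rewrite (drop_nth (BConst false)); last by rewrite Hs; lia.
    have -> : i.-1.+1 = i by lia.
    by rewrite (drop_nth (BConst false)) //; rewrite Hs; lia.
  exists (take i.-1 es ++ BOp b x y :: drop i.+1 es).
    by rewrite size_cat /= size_take size_drop Hs; case: ltnP; lia.
  apply: (linear_nf_sub _ Hnf).
    by rewrite [in all_vars es]Ees !all_vars_cat !all_vars_cons /= -!catA subseq_refl.
  move=> s Hs'; case: Hnf => _ _ Hg.
  rewrite /= Hg // /conn_s map_cat map_take /= map_drop /x /y.
  rewrite (nth_map (BConst false)); last by rewrite Hs; lia.
  by rewrite (nth_map (BConst false)) //; rewrite Hs; lia.
- move=> l m n g h _ IHg _ IHh q g0 es Hs Hnf.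
  have [es1 Hs1 Hnf1] := IHg q g0 es Hs Hnf.
  exact: IHh q (g \o g0) es1 Hs1 Hnf1.
Qed.

(* Every box map has a linear normal form (start from the identity). *)
Lemma box_linear_nf q r g : is_box q r g -> exists2 es, size es = r & linear_nf q es g.
Proof.
move=> Hg; apply: (linear_nf_post Hg (g := id) (es := map BVar (iota 0 q))).
  by rewrite size_map size_iota.
rewrite /linear_nf; have -> : all_vars (map BVar (iota 0 q)) = iota 0 q.
  by rewrite /all_vars -map_comp; elim: (iota 0 q) => //= a s ->.
split.
- exact: iota_ltn_sorted.
- by apply/allP => x; rewrite mem_iota.
- by move=> s Hs; rewrite -map_comp -{1}(mkseq_nth false s) Hs.
Qed.

(* Simplification: absorb constants, so that every formula becomes either a
   constant or constant-free, without changing its value or adding variables. *)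
Definition is_const (e : bexpr) : bool := if e is BConst _ then true else false.
Definition is_var (e : bexpr) : bool := if e is BVar _ then true else false.

Fixpoint const_free (e : bexpr) : bool :=
  match e with BConst _ => false | BVar _ => true | BOp _ a b => const_free a && const_free b end.

Definition smart_op (b : bool) (x y : bexpr) : bexpr :=
  match x with
  | BConst c => if c == b then BConst b else y
  | _ => match y with BConst c => if c == b then BConst b else x | _ => BOp b x y end
  end.

Fixpoint simplify (e : bexpr) : bexpr :=
  match e with BOp b e1 e2 => smart_op b (simplify e1) (simplify e2) | _ => e end.

Lemma beval_smart_op s b x y : beval s (smart_op b x y) = beval s (BOp b x y).
Proof.
rewrite /= /bool_op; case: x => [c|i|c x1 x2] /=.
- by case: b; case: c.
- by case: y => [c|j|c y1 y2] //=; case: b; case: c; rewrite ?orbT ?andbF ?orbF ?andbT.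
- by case: y => [c'|j|c' y1 y2] //=; case: b; case: c'; rewrite ?orbT ?andbF ?orbF ?andbT.
Qed.

Lemma bvars_smart_op b x y : subseq (bvars (smart_op b x y)) (bvars x ++ bvars y).
Proof.
rewrite /smart_op; case: x => [c|i|c x1 x2].
- by case: ifP => _; [exact: sub0seq | exact: subseq_refl].
- case: y => [c|j|c y1 y2]; try exact: subseq_refl.
  by case: ifP => _; [exact: sub0seq | exact: prefix_subseq].
- case: y => [c'|j|c' y1 y2]; try exact: subseq_refl.
  by case: ifP => _; [exact: sub0seq | exact: prefix_subseq].
Qed.

Lemma beval_simplify s e : beval s (simplify e) = beval s e.
Proof. by elim: e => //= b e1 IH1 e2 IH2; rewrite beval_smart_op /= IH1 IH2. Qed.

Lemma bvars_simplify e : subseq (bvars (simplify e)) (bvars e).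
Proof.
elim: e => [b|i|b e1 IH1 e2 IH2]; try exact: subseq_refl.
exact: subseq_trans (bvars_smart_op _ _ _) (cat_subseq IH1 IH2).
Qed.

Lemma simplify_shape e : is_const (simplify e) || const_free (simplify e).
Proof.
elim: e => [b|i|b e1 IH1 e2 IH2] //=; rewrite /smart_op; move: IH1 IH2.
case: (simplify e1) => [c|i|c x1 x2]; case: (simplify e2) => [c'|j|c' y1 y2] //= H1 H2;
  repeat case: ifP => _ //=; rewrite ?H1 ?H2 //.
Qed.

Lemma all_vars_simplify es : subseq (all_vars (map simplify es)) (all_vars es).
Proof.
elim: es => [|e es IH] //=; rewrite !all_vars_cons; exact: cat_subseq (bvars_simplify e) IH.
Qed.

Lemma box_simple_nf q m g : is_box q m g ->
  exists2 es, size es = m &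
    linear_nf q es g /\ all (fun e => is_const e || const_free e) es.
Proof.
move=> Hg; have [es Hs Hnf] := box_linear_nf Hg.
exists (map simplify es); first by rewrite size_map.
split; last by apply/allP => e /mapP [e0 _ ->]; exact: simplify_shape.
apply: (linear_nf_sub (all_vars_simplify es) Hnf) => s Hs'; case: Hnf => _ _ Hgs.
by rewrite Hgs // -map_comp; apply: eq_map => e /=; rewrite beval_simplify.
Qed.

Lemma beval_agree s s' e : (forall i, i \in bvars e -> nth false s i = nth false s' i) ->
  beval s e = beval s' e.
Proof.
elim: e => [b|i|b e1 IH1 e2 IH2] /= H //; first by apply: H; rewrite inE.
by rewrite IH1 ?IH2 // => i Hi; apply: H; rewrite mem_cat Hi ?orbT.
Qed.

Lemma const_free_vars e : const_free e -> bvars e != [::].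
Proof. by elim: e => //= b e1 IH1 e2 IH2 /andP [/IH1]; case: (bvars e1). Qed.

Lemma const_free_single e : const_free e -> size (bvars e) = 1 -> exists i, e = BVar i.
Proof.
case: e => [b|i|b e1 e2] //=; first by exists i.
move=> /andP [/const_free_vars H1 /const_free_vars H2]; rewrite size_cat.
by case: (bvars e1) H1 => // a l _; case: (bvars e2) H2 => // c l' _ /=; lia.
Qed.

Fixpoint subexpr (c e : bexpr) : Prop :=
  c = e \/ match e with BOp _ e1 e2 => subexpr c e1 \/ subexpr c e2 | _ => False end.

Lemma subexpr_vars c e : subexpr c e -> {subset bvars c <= bvars e}.
Proof.
elim: e => [b|i|b e1 IH1 e2 IH2] /=; try by case=> [->|].
case=> [->|[/IH1 H|/IH2 H]] // x Hx; rewrite mem_cat ?H ?orbT //.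
Qed.

Lemma cherry e : const_free e -> 1 < size (bvars e) ->
  exists b a a' x y, subexpr (BOp b (BVar a) (BVar a')) e /\ bvars e = x ++ a :: a' :: y.
Proof.
elim: e => [b|i|b e1 IH1 e2 IH2] //= /andP [C1 C2]; rewrite size_cat => Hs.
case: (ltnP 1 (size (bvars e1))) => H1.
  have [b' [a [a' [x [y [S E]]]]]] := IH1 C1 H1.
  by exists b', a, a', x, (y ++ bvars e2); split; [right; left|rewrite E -catA].
case: (ltnP 1 (size (bvars e2))) => H2.
  have [b' [a [a' [x [y [S E]]]]]] := IH2 C2 H2.
  by exists b', a, a', (bvars e1 ++ x), y; split; [right; right|rewrite E catA].
have /eqP E1 : size (bvars e1) == 1.
  by move: (const_free_vars C1); case: (bvars e1) H1 => // ? [].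
have /eqP E2 : size (bvars e2) == 1.
  by move: (const_free_vars C2); case: (bvars e2) H2 => // ? [].
have [a ->] := const_free_single C1 E1; have [a' ->] := const_free_single C2 E2.
by exists b, a, a', [::], [::]; split; [left|].
Qed.

Lemma beval_subexpr s s' c e : subexpr c e -> uniq (bvars e) ->
  (forall j, j \in bvars e -> j \notin bvars c -> nth false s j = nth false s' j) ->
  beval s c = beval s' c -> beval s e = beval s' e.
Proof.
elim: e => [b|i|b e1 IH1 e2 IH2] /=; try by case=> [-> _ _ ?|].
case=> [-> _ _ ? //|]; rewrite cat_uniq => -[S|S] /and3P [U1 D U2] H Hc.
- rewrite (IH1 S U1) ?(@beval_agree s s' e2) //.
  + move=> j Hj; apply: H; first by rewrite mem_cat Hj orbT.
    apply/negP => /(subexpr_vars S) Hj1; move/hasPn: D => /(_ j Hj); by rewrite Hj1.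
  + by move=> j Hj Hn; apply: H => //; rewrite mem_cat Hj.
- rewrite (IH2 S U2) ?(@beval_agree s s' e1) //.
  + move=> j Hj; apply: H; first by rewrite mem_cat Hj.
    apply/negP => /(subexpr_vars S) Hj1; move/hasPn: D => /(_ j Hj1); by rewrite Hj.
  + by move=> j Hj Hn; apply: H => //; rewrite mem_cat Hj orbT.
Qed.

Lemma all_vars_mem es e : e \in es -> {subset bvars e <= all_vars es}.
Proof.
elim: es => //= f es IH; rewrite inE => /orP [/eqP->|He] x Hx; rewrite all_vars_cons mem_cat.
  by rewrite Hx.
by rewrite (IH He x Hx) orbT.
Qed.

Lemma uniq_all_vars_same es f e x : uniq (all_vars es) -> f \in es -> e \in es ->
  x \in bvars f -> x \in bvars e -> f = e.
Proof.
elim: es => //= h es IH; rewrite all_vars_cons cat_uniq => /and3P [_ D U].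
rewrite !inE => /orP [/eqP->|Hf] /orP [/eqP->|He] //.
- move=> Hx /(all_vars_mem He) Hx'; move/hasPn: D => /(_ x Hx'); by rewrite Hx.
- move=> /(all_vars_mem Hf) Hx' Hx; move/hasPn: D => /(_ x Hx'); by rewrite Hx.
- exact: IH.
Qed.

Lemma size_all_vars_le q es : sorted ltn (all_vars es) -> all (fun i => i < q) (all_vars es) ->
  size (all_vars es) <= q.
Proof.
move=> S A; rewrite -(size_iota 0 q); apply: uniq_leq_size.
  exact: (sorted_uniq ltn_trans ltnn).
by move=> x Hx; move/allP: A => /(_ x Hx); rewrite mem_iota.
Qed.

Lemma count_with_vars_le es : count (fun e => bvars e != [::]) es <= size (all_vars es).
Proof.
elim: es => //= e es IH; rewrite all_vars_cons size_cat.
by case: (bvars e) => //= a l; lia.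
Qed.

(* A box map [1]^q -> [1]^m with q + 2 <= m has, besides any given coordinate
   k, a constant output coordinate: a linear normal form has at most q
   formulas with variables, so at least two constant ones. *)
Lemma box_map_const_coord q m g k : is_box q m g -> q.+2 <= m ->
  exists j d, [/\ 0 < j <= m, j != k & forall s, size s = q -> nth false (g s) j.-1 = d].
Proof.
move=> Hg Hqm; have [es Hs [S A E]] := box_linear_nf Hg.
set P := fun j => (j.+1 != k) && (bvars (nth (BConst false) es j) == [::]).
case: (boolP (has P (iota 0 m))) => [/hasP [j Hj /andP [Hk /eqP Hl]]|Hn].
  rewrite mem_iota /= in Hj.
  exists j.+1, (beval [::] (nth (BConst false) es j)); split => //.
  move=> s Hs'; rewrite E // /= (nth_map (BConst false)) ?Hs //.
  by apply: beval_agree => i; rewrite Hl.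
exfalso.
have Cvars := count_with_vars_le es.
have Csize := size_all_vars_le S A.
have Cconst : count (fun e => bvars e == [::]) es <= 1.
  rewrite -(mkseq_nth (BConst false) es) /mkseq count_map Hs.
  rewrite (@eq_in_count _ _ (fun j => (j < m) && (bvars (nth (BConst false) es j) == [::])));
    last by move=> j; rewrite mem_iota /= => ->.
  apply: (leq_trans (sub_count (a2 := pred1 k.-1) _ _)).
    move=> j /= /andP [Hjm Hj]; apply/eqP; move/hasPn: Hn => /(_ j).
    by rewrite mem_iota /= Hjm => /(_ isT); rewrite /P /= Hj andbT negbK => /eqP <-.
  by rewrite (count_uniq_mem _ (iota_uniq 0 m)); case: (_ \in _).
have Ctotal := count_predC (fun e => bvars e == [::]) es.
have Cnonconst : count (predC (fun e => bvars e == [::])) es =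
  count (fun e => bvars e != [::]) es by [].
lia.
Qed.

Lemma face_degen_eq i s : i < size s ->
  face_s i.+1 false (degen_s i.+1 s) = take i s ++ false :: drop i.+1 s.
Proof.
move=> Hi; rewrite /face_s /degen_s /=.
rewrite take_cat size_take Hi ltnn subnn take0 cats0.
by rewrite drop_cat size_take Hi ltnn subnn drop0.
Qed.

Lemma face_degen_nth i s j : i < size s -> j != i ->
  nth false (face_s i.+1 false (degen_s i.+1 s)) j = nth false s j.
Proof.
move=> Hi Hj; rewrite face_degen_eq // nth_cat size_take Hi.
case: ltnP => H1; first by rewrite nth_take.
have : i < j by rewrite ltn_neqAle H1 eq_sym Hj.
case: j Hj H1 => // j _ _ Hij; rewrite subSn //= nth_drop; congr nth; lia.
Qed.

Lemma face_conn_eq a b c s : a.+2 <= size s ->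
  face_s a.+2 c (conn_s a.+1 b s) =
  take a s ++ bool_op b (nth false s a) (nth false s a.+1) :: c :: drop a.+2 s.
Proof.
move=> Ha; rewrite /face_s /conn_s /=.
have Hs : size (take a s) = a by rewrite size_take; case: ltnP; lia.
rewrite take_cat Hs ltnNge leqnSn /= subSn // subnn /=.
by rewrite drop_cat Hs ltnNge leqnSn /= subSn // subnn /= take0 drop0 -catA.
Qed.

Lemma face_conn_nth a b c s j : a.+2 <= size s -> j != a -> j != a.+1 ->
  nth false (face_s a.+2 c (conn_s a.+1 b s)) j = nth false s j.
Proof.
move=> Ha H1 H2; rewrite face_conn_eq // nth_cat.
have Hs : size (take a s) = a by rewrite size_take; case: ltnP; lia.
rewrite Hs; case: ltnP => H3; first by rewrite nth_take.
have H4 : a.+1 < j by rewrite ltn_neqAle eq_sym H2 /= ltn_neqAle eq_sym H1 H3.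
have -> : j - a = (j - a.+2).+2 by lia.
by rewrite /= nth_drop; congr nth; lia.
Qed.

Lemma face_conn_merged a b c s : a.+2 <= size s ->
  nth false (face_s a.+2 c (conn_s a.+1 b s)) a = bool_op b (nth false s a) (nth false s a.+1).
Proof.
move=> Ha; rewrite face_conn_eq // nth_cat.
have Hs : size (take a s) = a by rewrite size_take; case: ltnP; lia.
by rewrite Hs ltnn subnn.
Qed.

Lemma face_conn_const a b c s : a.+2 <= size s ->
  nth false (face_s a.+2 c (conn_s a.+1 b s)) a.+1 = c.
Proof.
move=> Ha; rewrite face_conn_eq // nth_cat.
have Hs : size (take a s) = a by rewrite size_take; case: ltnP; lia.
by rewrite Hs ltnNge leqnSn /= subSn // subnn.
Qed.

(* An unused input coordinate i.+1: [g] does not see it, so it factors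
   through the degeneracy at i.+1. *)
Lemma nf_unused_var q es g i : linear_nf q es g -> i < q -> i \notin all_vars es ->
  forall s, size s = q -> g s = g (face_s i.+1 false (degen_s i.+1 s)).
Proof.
move=> [_ _ E] Hi Hni s Hs.
have Hsz : size (face_s i.+1 false (degen_s i.+1 s)) = q.
  by rewrite face_degen_eq ?Hs // size_cat /= size_take size_drop Hs Hi; lia.
rewrite !E //; apply/eq_in_map => e He; apply: beval_agree => j Hj.
rewrite face_degen_nth ?Hs //; apply/negP => /eqP Eji; move: Hni.
by rewrite -Eji (all_vars_mem He Hj).
Qed.

Lemma iota_adjacent q u w a a' : iota 0 q = u ++ a :: a' :: w ->
  [/\ a = size u, a' = (size u).+1 & (size u).+1 < q].
Proof.
move=> E.
have Hsz : (size u).+1 < q by have := size_iota 0 q; rewrite E size_cat /=; lia.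
split => //.
- by have := nth_iota 0 0 (ltnW Hsz); rewrite E nth_cat ltnn subnn.
- by have := nth_iota 0 0 Hsz; rewrite E nth_cat ltnNge leqnSn /= subSn // subnn.
Qed.

(* A cherry [BOp b (BVar a) (BVar a.+1)]: [g] only sees coordinates a.+1 and
   a.+2 through their max/min, so it factors through the connection there. *)
Lemma nf_cherry_conn q es g e b a : linear_nf q es g -> e \in es ->
  subexpr (BOp b (BVar a) (BVar a.+1)) e -> a.+1 < q ->
  forall s, size s = q -> g s = g (face_s a.+2 (~~ b) (conn_s a.+1 b s)).
Proof.
move=> [S _ E] He Sc Ha s Hs.
have U : uniq (all_vars es) := sorted_uniq ltn_trans ltnn S.
have Ue : uniq (bvars e).
  by case/splitPr: He U => p1 p2; rewrite all_vars_cat all_vars_cons !cat_uniq => /and3P [_ _ /andP []].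
have Ina : a \in bvars e by apply: (subexpr_vars Sc); rewrite /= inE eqxx.
have Ina' : a.+1 \in bvars e by apply: (subexpr_vars Sc); rewrite /= !inE eqxx orbT.
have Hsz : size (face_s a.+2 (~~ b) (conn_s a.+1 b s)) = q.
  by rewrite face_conn_eq ?Hs // size_cat /= size_take size_drop Hs; case: ltnP; lia.
rewrite !E //; apply/eq_in_map => f Hf.
case: (boolP ((a \in bvars f) || (a.+1 \in bvars f))) => [Hin|Hno].
- have -> : f = e.
    by case/orP: Hin => Hx; [exact: uniq_all_vars_same U Hf He Hx Ina
                            |exact: uniq_all_vars_same U Hf He Hx Ina'].
  apply: (beval_subexpr Sc Ue).
    move=> j _; rewrite /= !inE negb_or => /andP [H1 H2].
    by rewrite face_conn_nth ?Hs.
  rewrite /= face_conn_merged ?Hs // face_conn_const ?Hs //.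
  by rewrite /bool_op; case: (b); case: (nth false s a); case: (nth false s a.+1).
- apply: beval_agree => j Hj; rewrite face_conn_nth ?Hs //.
    by apply/negP => /eqP Ej; move: Hno; rewrite -Ej Hj.
  by apply/negP => /eqP Ej; move: Hno; rewrite -Ej Hj orbT.
Qed.

Lemma nf_identity q es g : linear_nf q es g -> size es <= q ->
  all_vars es = iota 0 q -> all (fun e => is_const e || is_var e) es ->
  forall s, size s = q -> g s = s.
Proof.
move=> [_ _ E] Hsz Hvars Hshape s Hs.
have Hcount : size (all_vars es) = count is_var es.
  by elim: es Hshape {E Hsz Hvars} => //= -[b|i|b e1 e2] es IH //= /IH ->.
have Hall : all is_var es.
  rewrite all_count eqn_leq count_size /= -Hcount Hvars size_iota.
  by have := size_iota 0 q; lia.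
have Ees : map BVar (all_vars es) = es.
  by elim: es Hall {E Hsz Hvars Hshape Hcount} => //= -[b|i|b e1 e2] es IH //= /IH ->.
by rewrite E // -Ees Hvars -map_comp -{2}(mkseq_nth false s) Hs.
Qed.

Lemma box_map_top_dim q m g : is_box q m g -> m <= q ->
  [\/ forall s, size s = q -> g s = s,
      exists2 i, 0 < i <= q & forall s, size s = q -> g s = g (face_s i false (degen_s i s))
    | exists b, exists2 i, 0 < i < q &
        forall s, size s = q -> g s = g (face_s i.+1 (~~ b) (conn_s i b s))].
Proof.
move=> Hg Hmq; have [es Hs [Hnf Hshape]] := box_simple_nf Hg.
have [S A _] := Hnf.
case: (boolP (has (fun i => i \notin all_vars es) (iota 0 q))) => [/hasP [i Hi Hni]|Hused].
  by rewrite mem_iota in Hi; apply: Or32; exists i.+1 => //; exact: nf_unused_var Hnf _ Hni.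
have Hvars : all_vars es = iota 0 q.
  apply: (irr_sorted_eq ltn_trans ltnn S (iota_ltn_sorted 0 q)) => x.
  rewrite mem_iota /=; apply/idP/idP => [Hx|Hx]; first by move/allP: A => /(_ x Hx).
  by move/hasPn: Hused => /(_ x); rewrite mem_iota /= Hx negbK => ->.
case: (boolP (has (fun e => 1 < size (bvars e)) es)) => [/hasP [e He Hse]|Hsmall].
  have Ce : const_free e by move/allP: Hshape => /(_ e He); case: e He Hse.
  have [b [a [a' [x [y [Sc Ebv]]]]]] := cherry Ce Hse.
  have [p1 [p2 Ees]] : exists p1 p2, es = p1 ++ e :: p2.
    by case/splitPr: He => p1 p2; exists p1, p2.
  have Eiota : iota 0 q = (all_vars p1 ++ x) ++ a :: a' :: (y ++ all_vars p2).
    by rewrite -Hvars Ees all_vars_cat all_vars_cons Ebv -!catA.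
  have [Ea Ea' Hlt] := iota_adjacent Eiota.
  rewrite -Ea in Ea' Hlt; subst a'.
  apply: Or33; exists b, a.+1; first by lia.
  exact: nf_cherry_conn Hnf He Sc Hlt.
apply: Or31; apply: (nf_identity Hnf); [by rewrite Hs | exact: Hvars |].
apply/allP => e He; move/allP: Hshape => /(_ e He) /orP [->//|Ce].
move/hasPn: Hsmall => /(_ e He); rewrite -leqNgt => H1.
have /eqP H2 : size (bvars e) == 1 by move: (const_free_vars Ce) H1; case: (bvars e) => // ? [].
by have [i ->] := const_free_single Ce H2.
Qed.

Lemma is_box_size a b h : is_box a b h -> forall s, size s = a -> size (h s) = b.
Proof.
elim=> {a b h}.
- by [].
- move=> m k e Hk s Hs; rewrite /face_s size_cat /= size_take size_drop Hs; case: ltnP; lia.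
- move=> m i Hi s Hs; rewrite /degen_s size_cat size_take size_drop Hs; case: ltnP; lia.
- move=> m i e Hi s Hs; rewrite /conn_s size_cat /= size_take size_drop Hs; case: ltnP; lia.
- by move=> l m n g h _ IHg _ IHh s Hs /=; apply: IHh; apply: IHg.
Qed.

Definition mk_tuple a b h (H : is_box a b h) (t : a.-tuple bool) : b.-tuple bool :=
  @Tuple b bool (h (val t)) (introT eqP (is_box_size H (size_tuple t))).

Lemma mk_box_map a b h (H : is_box a b h) : is_box_map [ffun t => mk_tuple H t].
Proof. by exists h => // t; rewrite ffunE. Qed.

Definition mk_boxHom a b h (H : is_box a b h) : boxHom a b := exist _ _ (mk_box_map H).

Lemma mk_boxHomE a b h (H : is_box a b h) t : val (sval (mk_boxHom H) t) = h (val t).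
Proof. by rewrite /= ffunE. Qed.

Lemma boxHom_ext a b (f g : boxHom a b) :
  (forall t, val (sval f t) = val (sval g t)) -> f = g.
Proof. by move=> H; apply: boxHom_eq; apply/ffunP => t; apply: val_inj; apply: H. Qed.

Lemma boxHom_id_dim (a b : nat) (c : boxHom a b) :
  (forall t, val (sval c t) = val t) -> a = b.
Proof.
move=> H; have := congr1 size (H (nseq_tuple a false)).
by rewrite !size_tuple.
Qed.

Lemma rep_factor q p m (c : boxHom q m) g h g' (Hh : is_box q p h) (Hg' : is_box p m g') :
  (forall t, val (sval c t) = g (val t)) -> (forall s, size s = q -> g s = g' (h s)) ->
  bcomp (mk_boxHom Hg') (mk_boxHom Hh) = c.
Proof.
move=> Hc Hfac; apply: boxHom_ext => t.
by rewrite /= ffunE mk_boxHomE /= mk_boxHomE Hc Hfac // size_tuple.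
Qed.

Lemma rep_high_cell m q (c : boxHom q m) : m <= q ->
  (forall t, val (sval c t) = val t) \/ degenerate (X := rep m) c.
Proof.
move=> Hmq; have [g Hg Hc] := svalP c.
case: (box_map_top_dim Hg Hmq) => [Hid|[i Hi Hfac]|[b [i Hi Hfac]]].
- by left => t; rewrite Hc Hid // size_tuple.
- right; have [r Er] : exists r, q = r.+1 by exists q.-1; lia.
  subst q; have Hdeg : is_box r.+1 r (degen_s i) by apply: box_degen; lia.
  have Hface : is_box r m (g \o face_s i false).
    by apply: box_comp Hg; apply: box_face; lia.
  exists r, (mk_boxHom Hface), (mk_boxHom Hdeg).
  split; first exact: rep_factor Hdeg Hface Hc Hfac.
  by split => //; left; exists i; split => // t; rewrite mk_boxHomE.
- right; have [r Er] : exists r, q = r.+2 by exists q.-2; lia.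
  subst q; have Hconn : is_box r.+2 r.+1 (conn_s i b) by apply: box_conn; lia.
  have Hface : is_box r.+1 m (g \o face_s i.+1 (~~ b)).
    by apply: box_comp Hg; apply: box_face; lia.
  exists r.+1, (mk_boxHom Hface), (mk_boxHom Hconn).
  split; first exact: rep_factor Hconn Hface Hc Hfac.
  by split => //; right; exists i, b; split => // t; rewrite mk_boxHomE.
Qed.

Lemma face_degen_fixed j d s : 0 < j <= size s -> nth false s j.-1 = d ->
  face_s j d (degen_s j s) = s.
Proof.
move=> Hj Hn; rewrite /face_s /degen_s.
have Ht : size (take j.-1 s) = j.-1 by rewrite size_take; case: ltnP; lia.
rewrite take_cat Ht ltnn subnn take0 cats0 drop_cat Ht ltnn subnn drop0.
rewrite -{3}(cat_take_drop j.-1 s) [drop j.-1 s](drop_nth false); last lia.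
by rewrite Hn; congr (_ ++ _ :: drop _ _); lia.
Qed.

(* A cell of [rep m] with a constant coordinate j != k lies in the open box
   (it factors through the face d_{j,d}). *)
Lemma open_box_of_const m k e q (c : boxHom q m) g j d :
  is_box q m g -> (forall t, val (sval c t) = g (val t)) -> 0 < j <= m -> j != k ->
  (forall s, size s = q -> nth false (g s) j.-1 = d) -> in_open_box k e c.
Proof.
move=> Hg Hc Hj Hjk Hd.
have Hm : m = m.-1.+1 by lia.
have Hf : is_box m.-1 m (face_s j d) by rewrite {2}Hm; apply: box_face; lia.
have Hdg : is_box q m.-1 (degen_s j \o g).
  by apply: box_comp Hg _; rewrite {1}Hm; apply: box_degen; lia.
exists j, d, (mk_boxHom Hf), (mk_boxHom Hdg); split => //.
- by apply/negP => /eqP [E]; move/eqP: Hjk.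
- by move=> t; rewrite mk_boxHomE.
- apply: esym; apply: (rep_factor Hdg Hf Hc) => s Hs /=.
  by rewrite face_degen_fixed ?(is_box_size Hg Hs) //; apply: Hd.
Qed.

Lemma open_box_of_face m k e q (c : boxHom q m) j d : (j, d) != (k, e) -> 0 < j <= m ->
  q.+1 = m -> (forall t, val (sval c t) = face_s j d (val t)) -> in_open_box k e c.
Proof.
move=> Hjd Hj Hq Hc.
have Hf : is_box m.-1 m (face_s j d) by rewrite -Hq /=; apply: box_face; lia.
have Hid : is_box q m.-1 id by rewrite -Hq; exact: box_id.
exists j, d, (mk_boxHom Hf), (mk_boxHom Hid); split => //.
- by move=> t; rewrite mk_boxHomE.
- by apply: esym; apply: (rep_factor Hid Hf Hc).
Qed.

Definition ntriv (n : nat) (Y : mcSet) k (y : cell Y k) : Prop :=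
  forall p (f : boxHom p k), n < p -> marked (act f y).

Lemma ntriv_act n (Y : mcSet) p k (f : boxHom p k) (y : cell Y k) :
  ntriv n y -> ntriv n (act f y).
Proof. by move=> H p' g Hp; rewrite -act_comp; apply: H. Qed.

Lemma ntriv_map n (X Y : mcSet) (f : mmap X Y) k (x : cell X k) :
  ntriv n x -> ntriv n (mcomp f k x).
Proof. by move=> H p g Hp; rewrite -mnat; apply: mmark; apply: H. Qed.

Lemma sig_eq (A : Type) (P : A -> Prop) (u v : {a : A | P a}) : sval u = sval v -> u = v.
Proof. by apply: eq_sig_hprop => ? ? ?; apply: proof_irrelevance. Qed.

Definition triv_core_cset (n : nat) (Y : mcSet) : cSet.
Proof.
refine (@CSet (fun k => {y : cell Y k | ntriv n y})
  (fun p k f y => exist _ (act f (sval y)) (ntriv_act f (svalP y))) _ _).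
- by move=> k y; apply: sig_eq; exact: act_id.
- by move=> l p k f g y; apply: sig_eq; exact: act_comp.
Defined.

Definition triv_core (n : nat) (Y : mcSet) : mcSet.
Proof.
refine (@MCSet (triv_core_cset n Y) (fun k y => marked (sval y)) _ _).
- by move=> [y py]; apply: marked_pos.
- move=> k [y py] [p [z [f [E [Hk Hd]]]]]; apply: marked_degen.
  by exists p, (sval z), f; split => //; rewrite -E.
Defined.

Definition to_triv_core (n : nat) (B X : mcSet) (h : mmap B X)
  (H : forall k (x : cell B k), ntriv n (mcomp h k x)) : mmap B (triv_core n X).
Proof.
refine (@MMap B (triv_core n X) (fun k x => exist _ (mcomp h k x) (H k x)) _ _).
- by move=> p k f x; apply: sig_eq; apply: mnat.
- by move=> k x hx; apply: mmark.
Defined.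

Definition triv_core_incl (n : nat) (X : mcSet) : mmap (triv_core n X) X.
Proof.
refine (@MMap (triv_core n X) X (fun k x => sval x) (fun _ _ _ _ => erefl) _).
by move=> k x hx.
Defined.

Definition triv_core_map (n : nat) (X Y : mcSet) (f : mmap X Y) :
  mmap (triv_core n X) (triv_core n Y) :=
  @to_triv_core n (triv_core n X) Y (mcompose f (triv_core_incl n X))
    (fun k x => ntriv_map f (svalP x)).

Lemma triv_core_marked n (Y : mcSet) k (y : cell (triv_core n Y) k) :
  n < k -> marked (sval y).
Proof. by move=> Hk; have := svalP y k (bid k) Hk; rewrite act_id. Qed.

Lemma tau_ntriv n (X Y : mcSet) (f : mmap (tau n X) Y) k (x : cell X k) :
  ntriv n (mcomp f k x).
Proof. by move=> p g Hp; rewrite -mnat; apply: mmark; right. Qed.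

Definition adj_right (n : nat) (X Y : mcSet) (f : mmap (tau n X) Y) : mmap X (triv_core n Y).
Proof.
refine (@MMap X (triv_core n Y) (fun k x => exist _ (mcomp f k x) (tau_ntriv f x)) _ _).
- by move=> p k g x; apply: sig_eq; apply: mnat.
- by move=> k x hx; apply: mmark; left.
Defined.

Definition adj_left (n : nat) (X Y : mcSet) (g : mmap X (triv_core n Y)) : mmap (tau n X) Y.
Proof.
refine (@MMap (tau n X) Y (fun k x => sval (mcomp g k x)) _ _).
- by move=> p k f x; rewrite mnat.
- move=> k x [hx|hk]; first exact: (@mmark _ _ g k x hx).
  exact: triv_core_marked.
Defined.

Lemma tau_left_adjoint n : is_left_adjoint (@tau_map n).
Proof.
exists (triv_core n), (triv_core_map n), (@adj_right n), (@adj_left n); split.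
- by [].
- by move=> X Y g k x; apply: sig_eq.
- by move=> X' X Y h f k x; apply: sig_eq.
- by move=> X Y Y' h f k x; apply: sig_eq.
Qed.

Lemma llp_transpose n (A B X Y : mcSet) (f : mmap A B) (p : mmap X Y) :
  llp f (triv_core_map n p) -> llp (tau_map n f) p.
Proof.
move=> H u v E.
have E' : homeq (mcompose (triv_core_map n p) (adj_right u)) (mcompose (adj_right v) f).
  by move=> k x; apply: sig_eq; exact: E k x.
have [h [H1 H2]] := H (adj_right u) (adj_right v) E'.
exists (adj_left h); split => k x /=.
- by have := congr1 sval (H1 k x).
- by have := congr1 sval (H2 k x).
Qed.

(* tau_n preserves monomorphisms: maps out of tau_n Z are determined by the
   underlying maps, which can be tested on Z with its minimal marking. *)
Lemma degenerate_map (A B : mcSet) (f : mmap A B) k (x : cell A k) :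
  degenerate x -> degenerate (mcomp f k x).
Proof.
case=> p [y [g [E [Hk Hd]]]]; exists p, (mcomp f p y), g; split => //.
by rewrite -E mnat.
Qed.

Definition minmark (Z : mcSet) : mcSet := mark_with (X := ucset Z) (fun _ _ => False).

Definition unmark (n : nat) (Z X : mcSet) (g : mmap Z (tau n X)) : mmap (minmark Z) X.
Proof.
refine (@MMap (minmark Z) X (fun k z => mcomp g k z) (@mnat _ _ g) _).
move=> k z [_ [Hd|[]]]; apply: marked_degen.
exact: (degenerate_map g (x := z) Hd).
Defined.

Lemma mono_tau n (X Y : mcSet) (f : mmap X Y) : mono f -> mono (tau_map n f).
Proof. by move=> Hf Z g h E; exact: Hf (minmark Z) (unmark g) (unmark h) E. Qed.

Section ModelStructureFacts.
Variable M : ModelStructure.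

Lemma unit_eq (a b : unit) : a = b.
Proof. by case: a; case: b. Qed.

Lemma fib_homeq (X Y : mcSet) (p p' : mmap X Y) : homeq p p' -> msF M p -> msF M p'.
Proof.
move=> E Hp; case: (ms_retract M (f := p') (g := p)) => [|_ _]; last exact.
by exists (mid X), (mid X), (mid Y), (mid Y); split => // k x /=; rewrite E.
Qed.

(* a map with the right lifting property against trivial cofibrations is a
   fibration (it is a retract of its fibration factor) *)
Lemma fib_of_rlp (X Y : mcSet) (p : mmap X Y) :
  (forall (A B : mcSet) (i : mmap A B), msC M i -> msW M i -> llp i p) -> msF M p.
Proof.
move=> H.
have [Z [t [q [Ct Wt Fq Eq]]]] := ms_fact_tc M p.
have [h [H1 H2]] := H _ _ t Ct Wt (mid X) q (fun k x => esym (Eq k x)).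
case: (ms_retract M (f := p) (g := q)) => [|_ _]; last exact.
exists t, h, (mid Y), (mid Y); split => k x //=; [exact: H1 | exact: Eq | by rewrite -H2].
Qed.

(* fibrations compose (lift first against the second factor) *)
Lemma fib_comp (X Y Z : mcSet) (f : mmap X Y) (g : mmap Y Z) :
  msF M f -> msF M g -> msF M (mcompose g f).
Proof.
move=> Ff Fg; apply: fib_of_rlp => A B t Ct Wt u v E.
have [h1 [H11 H12]] := ms_lift_tc Ct Wt Fg (u := mcompose f u) (v := v) E.
have [h [Hh1 Hh2]] := ms_lift_tc Ct Wt Ff (u := u) (v := h1) (fun k x => esym (H11 k x)).
by exists h; split => // k x /=; rewrite -H12 /= -Hh2.
Qed.

Lemma fibrant_term : fibrant M term.
Proof.
apply: fib_of_rlp => A B i _ _ u v E.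
by exists v; split => k x; apply: unit_eq.
Qed.

Lemma fibrant_source (X Y : mcSet) (p : mmap X Y) : msF M p -> fibrant M Y -> fibrant M X.
Proof.
move=> Fp FY; apply: fib_homeq (fib_comp Fp FY).
by move=> k x; apply: unit_eq.
Qed.

(* Take a fibrant
   replacement j : B -> B' and factor j o i as a trivial cofibration k
   followed by a fibration p; lifting i and then j against p exhibits j o i
   as a retract of k, and two-out-of-three concludes. *)
Lemma weq_of_llp (A B : mcSet) (i : mmap A B) :
  (forall (X Y : mcSet) (p : mmap X Y), msF M p -> fibrant M X -> fibrant M Y -> llp i p) ->
  msW M i.
Proof.
move=> H.
have [B' [j [q [Cj Wj Fq _]]]] := ms_fact_tc M (to_term B).
have FB' : fibrant M B' by apply: fib_homeq Fq => k x; apply: unit_eq.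
have [A' [k [p [_ Wk Fp Ep]]]] := ms_fact_tc M (mcompose j i).
have [h1 [H11 H12]] := H _ _ p Fp (fibrant_source Fp FB') FB' k j Ep.
have [h [Hh1 Hh2]] := ms_lift_tc Cj Wj Fp (u := h1) (v := mid B') H12.
have Wji : msW M (mcompose j i).
  case: (ms_retract M (f := mcompose j i) (g := k)) => [|+ _ _]; last exact.
  exists (mid A), (mid A), h, p; split => k' x //=; first exact: Hh2.
  - by rewrite -H11; have := Hh1 k' (mcomp i k' x).
  - by have := Ep k' x.
by case: (ms_2of3 M i j) => _ _; apply.
Qed.

End ModelStructureFacts.

(* Markers of dimension > n: the new marked top cell goes to a cell of the
   core, which is marked. *)
Lemma llp_marker n (X Y : mcSet) (p : mmap X Y) m :
  n < m -> llp (marker m) (triv_core_map n p).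
Proof.
move=> Hm u v E.
have Hmk : forall k (x : cell (cube_top m) k), marked x -> marked (mcomp u k x).
  move=> k x [Hk [Hd|Htop]]; first by apply: (@mmark _ _ u k x); split => //; left.
  have Ek := boxHom_id_dim Htop; subst k; exact: triv_core_marked.
exists (@MMap (cube_top m) (triv_core n X) (fun k x => mcomp u k x) (@mnat _ _ u) Hmk).
by split => k x //; exact: E k x.
Qed.

Lemma llp_core_of_trivcof n (M : ModelStructure) (A B X Y : mcSet) (i : mmap A B)
    (p : mmap X Y) :
  msC M i -> msW M i -> msF M p ->
  (forall (u : mmap A (triv_core n X)) (v : mmap B (triv_core n Y)) (h : mmap B X),
     homeq (mcompose h i) (mcompose (triv_core_incl n X) u) ->
     homeq (mcompose p h) (mcompose (triv_core_incl n Y) v) ->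
     forall q (x : cell B q), ntriv n (mcomp h q x)) ->
  llp i (triv_core_map n p).
Proof.
move=> C W F Hcore u v E.
have [h [H1 H2]] := ms_lift_tc C W F (u := mcompose (triv_core_incl n X) u)
  (v := mcompose (triv_core_incl n Y) v) (fun q x => congr1 sval (E q x)).
exists (to_triv_core (Hcore u v h H1 H2)).
by split => q x; apply: sig_eq; [exact: H1 | exact: H2].
Qed.

(* Elementary marking extensions are bijective on cells. *)
Lemma llp_mark_ext n (M : ModelStructure) (X Y : mcSet) (p : mmap X Y) m k e :
  msC M (mark_ext m k e) -> msW M (mark_ext m k e) -> msF M p ->
  llp (mark_ext m k e) (triv_core_map n p).
Proof.
move=> C W F; apply: (llp_core_of_trivcof C W F) => u v h H _ q x.
by rewrite (H q x); exact: svalP (mcomp u q x).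
Qed.

Lemma rep_low_cell_in_open_box m k e q (c : boxHom q m) : q.+2 <= m -> in_open_box k e c.
Proof.
move=> Hqm; have [g Hg Hc] := svalP c.
have [j [d [Hj Hjk Hd]]] := box_map_const_coord k Hg Hqm.
exact: open_box_of_const Hg Hc Hj Hjk Hd.
Qed.

(* The top cell of box^m_{k,e} is marked: its normal form has no factors. *)
Lemma cube_k_top_marked m k e q (c : boxHom q m) : 0 < q ->
  (forall t, val (sval c t) = val t) -> @marked (cube_k m k e) q c.
Proof.
move=> Hq Hc; split => //; right; exists [::]; split => //; split => //.
by rewrite addn0; apply: boxHom_id_dim.
Qed.

(* The (m-1)-cells: if a lift [l] of an open box inclusion marks the images of
   the open box cells of dimension > n, with n < m - 1, then lifting the
   elementary marking extension along [l] shows that [l] marks the images of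
   all (m-1)-cells. *)
Lemma open_box_lift_codim1 n (M : ModelStructure) (X Y : mcSet) (p : mmap X Y) m k e
    (l : mmap (cube_k m k e) X) (v : mmap (cube_k m k e) (triv_core n Y)) :
  msC M (mark_ext m k e) -> msW M (mark_ext m k e) -> msF M p ->
  homeq (mcompose p l) (mcompose (triv_core_incl n Y) v) -> n < m.-1 ->
  (forall q (c : boxHom q m), in_open_box k e c -> n < q -> marked (mcomp l q c)) ->
  forall c : boxHom m.-1 m, marked (mcomp l m.-1 c).
Proof.
move=> CE WE F Ecomm Hn Hopen c.
have Hmk1 : forall q (x : cell (cube_k' m k e) q), marked x -> marked (mcomp l q x).
  move=> q x [Hq [Hd | [Hc | [j [d [Hjd [_ Hall Hsz Hv]]]]]]].
  - by apply: (@mmark _ _ l q x); split => //; left.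
  - by apply: (@mmark _ _ l q x); split => //; right.
  - move: Hall => /= /andP [Hj _]; move: Hsz => /= Hsz.
    apply: Hopen; last lia.
    by apply: (open_box_of_face Hjd Hj); [lia | move=> t; rewrite Hv].
pose u1 := @MMap (cube_k' m k e) X (fun q x => mcomp l q x) (@mnat _ _ l) Hmk1.
have Hmk2 : forall q (x : cell (cube_k'' m k e) q), marked x -> marked (sval (mcomp v q x)).
  move=> q x [Hx|Hdim]; first exact: (@mmark _ _ v q x Hx).
  by apply: triv_core_marked; lia.
pose v1 := @MMap (cube_k'' m k e) Y (fun q x => sval (mcomp v q x))
  (fun a b f x => congr1 sval (mnat v f x)) Hmk2.
have [h1 [K1 _]] := ms_lift_tc CE WE F (u := u1) (v := v1) (fun q x => Ecomm q x).
have /= <- := K1 m.-1 c; apply: (@mmark _ _ h1 m.-1 c); right; lia.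
Qed.

Lemma llp_open_box n (M : ModelStructure) (X Y : mcSet) (p : mmap X Y) m k e :
  msC M (open_box_incl m k e) -> msW M (open_box_incl m k e) ->
  (1 < m -> msC M (mark_ext m k e) /\ msW M (mark_ext m k e)) ->
  msF M p -> llp (open_box_incl m k e) (triv_core_map n p).
Proof.
move=> C W ME F; apply: (llp_core_of_trivcof C W F) => u v l H1 H2.
have Hopen : forall q (c : boxHom q m), in_open_box k e c -> n < q -> marked (mcomp l q c).
  by move=> q c Hin Hq; have /= -> := H1 q (exist _ c Hin); exact: triv_core_marked.
have Hmarked : forall q (c : boxHom q m), n < q -> marked (mcomp l q c).
  move=> q c Hq; case: (ltnP q.+1 m) => Hlow.
    exact: Hopen _ _ (rep_low_cell_in_open_box k e c Hlow) Hq.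
  case: (ltnP q m) => Hhigh.
    have Eq : q = m.-1 by lia.
    subst q; have [CE WE] := ME ltac:(lia).
    exact: open_box_lift_codim1 CE WE F H2 Hq Hopen c.
  apply: mmark; case: (rep_high_cell c Hhigh) => [Htop|Hdeg].
  - by apply: cube_k_top_marked => //; lia.
  - by split; [lia | left].
by move=> q x p' f Hp; rewrite -mnat; apply: Hmarked.
Qed.

(* The core of the terminal object is not terminal, but lifting against the
   map to it suffices to lift against the map to the terminal object. *)
Lemma llp_to_term n (A B Y : mcSet) (i : mmap A B) :
  llp i (triv_core_map n (to_term Y)) -> llp i (to_term (triv_core n Y)).
Proof.
move=> H u v E.
have Htriv : forall k (x : cell B k), ntriv n (mcomp (to_term B) k x).
  by move=> k x p f Hp /=; lia.
have [h [H1 H2]] := H u (to_triv_core Htriv) (fun k x => sig_eq (unit_eq _ _)).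
by exists h; split => // k x; apply: unit_eq.
Qed.

Section CoreFibrations.
Variables (n : nat) (Mn M : ModelStructure).
Hypotheses (HMn : is_ntriv_comical n Mn) (HM : is_comical M).

Definition rlp_ntriv_generators (X Y : mcSet) (q : mmap X Y) : Prop :=
  [/\ forall m k e, 0 < k <= m -> llp (open_box_incl m k e) q,
      forall m k e, 1 < m <= n.+1 -> 0 < k <= m -> llp (mark_ext m k e) q &
      forall m, n < m -> llp (marker m) q].

Lemma fib_of_rlp_ntriv_generators (X Y : mcSet) (q : mmap X Y) :
  fibrant Mn Y -> rlp_ntriv_generators q -> msF Mn q.
Proof. by case: HMn => _ _ _ _ HF FY [Hob Hme Hmk]; exact: HF FY Hob Hme Hmk. Qed.

Lemma core_map_rlp (X Y : mcSet) (p : mmap X Y) :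
  msF M p -> rlp_ntriv_generators (triv_core_map n p).
Proof.
case: HM => _ HOB HME _ Fp; split.
- move=> m k e Hk; have [C W] := HOB m k e Hk.
  by apply: llp_open_box C W _ Fp => Hm; exact: HME.
- move=> m k e /andP [Hm _] Hk; have [C W] := HME m k e Hm Hk.
  exact: llp_mark_ext C W Fp.
- by move=> m Hm; apply: llp_marker.
Qed.

Lemma core_fibrant (Y : mcSet) : fibrant M Y -> fibrant Mn (triv_core n Y).
Proof.
move=> FY; apply: fib_of_rlp_ntriv_generators; first exact: fibrant_term.
have [Hob Hme Hmk] := core_map_rlp FY.
split => [m k e Hk|m k e Hm Hk|m Hm]; apply: llp_to_term; [exact: Hob | exact: Hme | exact: Hmk].
Qed.

Lemma core_fibration (X Y : mcSet) (p : mmap X Y) :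
  msF M p -> fibrant M Y -> msF Mn (triv_core_map n p).
Proof.
move=> Fp FY; apply: fib_of_rlp_ntriv_generators; first exact: core_fibrant.
exact: core_map_rlp.
Qed.

End CoreFibrations.

Theorem proposition3p6 (n : nat) (Mn M : ModelStructure) :
  is_ntriv_comical n Mn -> is_comical M ->
  @left_quillen Mn M (tau n) (@tau_map n).
Proof.
move=> HMn HM; have [HnC _ _ _ _] := HMn; have [HC _ _ _] := HM.
split.
- exact: tau_left_adjoint.
- by move=> X Y f /HnC Hf; apply/HC; exact: mono_tau.
- move=> X Y f Cf Wf; split; first by apply/HC; apply: mono_tau; apply/HnC.
  apply: weq_of_llp => X' Y' p Fp _ FY; apply: llp_transpose.
  exact: ms_lift_tc Cf Wf (core_fibration HMn HM Fp FY).
Qed.
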